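(* Let $D_i$ be a finite set with a total order $\geq_i$ (reflexive, transitive, antisymmetric, total), with strict part $>$. For subsets $X',X''\subseteq D_i$ define $X'\succeq X''$ iff for every $d''\in X''\setminus X'$ there exists $d'\in X'\setminus X''$ with $d'>d''$. Then $\succeq$ is reflexive ($X\succeq X$ for all $X\subseteq D_i$), antisymmetric ($X_1\succeq X_2$ and $X_2\succeq X_1$ imply $X_1=X_2$), and for subsets $X_1,X_2,X_3\subseteq D_i$ with $X_1\not\subseteq X_3$ and $X_3\not\subseteq X_1$, $X_1\succeq X_2$ and $X_2\succeq X_3$ imply $X_1\succeq X_3$.
   Context: Here $D_i$ is the finite set of desire rules of an agent, totally ordered by a priority relation $\geq_i$; $\succeq$ lifts this ordering to sets of desire rules. *)

From mathcomp Require Import all_boot.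
Set Implicit Arguments. Unset Strict Implicit. Unset Printing Implicit Defensive.

Definition total_order (T : finType) (ge : rel T) : Prop :=
  [/\ reflexive ge, transitive ge, antisymmetric ge & total ge].

Definition gt_of (T : finType) (ge : rel T) (x y : T) : bool := ge x y && (x != y).

Definition set_pref (T : finType) (ge : rel T) (X1 X2 : {set T}) : Prop :=
  forall d2, d2 \in X2 :\: X1 -> exists2 d1, d1 \in X1 :\: X2 & gt_of ge d1 d2.

From mathcomp Require Import all_boot.

Set Implicit Arguments.
Unset Strict Implicit.
Unset Printing Implicit Defensive.

(* On a finite total order, [X1 \succeq X2] says that the greatest element of
   the symmetric difference of X1 and X2, if any, lies in X1; this is the
   lexicographic order on characteristic vectors read from the top, so it is a
   total order on subsets.  Both antisymmetry and transitivity are proved by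
   the same device: a chain of ever larger witnesses cannot go on forever in a
   finite type. *)

Section FiniteStrictOrder.

Variables (T : finType) (r : rel T).
Hypotheses (r_irr : irreflexive r) (r_trans : transitive r).

Lemma no_ascending_pred (P : T -> Prop) :
  (forall x, P x -> exists2 y, P y & r y x) -> forall x, ~ P x.
Proof.
move=> ascending.
suff bounded n x : #|[set y | r y x]| < n -> ~ P x by move=> x; apply: bounded.
elim: n x => [//|n IHn] x lt_n Px.
have [y Py r_yx] := ascending x Px.
apply: (IHn y _ Py); apply: leq_trans (proper_card _) lt_n.
apply/properP; split; last by exists y; rewrite !inE ?r_irr.
by apply/subsetP => z; rewrite !inE => r_zy; apply: r_trans r_zy r_yx.
Qed.

End FiniteStrictOrder.

Lemma set_pref_refl (T : finType) (ge : rel T) (X : {set T}) : set_pref ge X X.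
Proof. by move=> d; rewrite setDv inE. Qed.

Section SetPreference.

Variables (T : finType) (ge : rel T).
Hypothesis ge_total : total_order ge.

Local Notation gt := (gt_of ge).

Lemma ge_refl : reflexive ge.
Proof. by case: ge_total. Qed.

Lemma gt_ge x y : gt x y -> ge x y.
Proof. by case/andP. Qed.

Lemma gt_irr : irreflexive gt.
Proof. by move=> x; rewrite /gt_of eqxx andbF. Qed.

Lemma gt_ge_trans y x z : gt x y -> ge y z -> gt x z.
Proof.
case: ge_total => _ ge_trans ge_anti _ /andP[ge_xy neq_xy] ge_yz.
rewrite /gt_of (ge_trans _ _ _ ge_xy ge_yz).
apply: contra neq_xy => /eqP eq_xz; rewrite -eq_xz in ge_yz.
by apply/eqP/ge_anti; rewrite ge_xy ge_yz.
Qed.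

Lemma gt_trans : transitive gt.
Proof. by move=> y x z gt_xy /gt_ge; apply: gt_ge_trans. Qed.

Lemma set_pref_anti (X1 X2 : {set T}) :
  set_pref ge X1 X2 -> set_pref ge X2 X1 -> X1 = X2.
Proof.
move=> pref12 pref21.
pose D := (X1 :\: X2) :|: (X2 :\: X1).
have symdiff_empty z : z \notin D.
  apply/negP; apply: (@no_ascending_pred _ _ gt_irr gt_trans (fun x => x \in D)) => x.
  by rewrite inE => /orP[/pref21|/pref12] [y y_in gt_yx];
    exists y; rewrite // inE y_in ?orbT.
apply/setP => z; move: (symdiff_empty z); rewrite !inE.
by case: (z \in X1); case: (z \in X2).
Qed.

Lemma set_pref_trans (X2 X1 X3 : {set T}) :
  set_pref ge X1 X2 -> set_pref ge X2 X3 -> set_pref ge X1 X3.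
Proof.
move=> pref12 pref23 d3 d3_in.
have [/exists_inP[d1 ? ?]|no_winner] :=
  boolP [exists d1 in X1 :\: X3, gt d1 d3]; first by exists d1.
exfalso; move/exists_inP: no_winner => no_winner.
(* Every element of P is beaten by another one, through X1 :\: X2 and/or
   X2 :\: X3, unless some element of X1 :\: X3 beats d3. *)
pose P z := (z \in (X2 :|: X3) :\: X1) && ge z d3.
have P_of_X2 w : w \in X2 :\: X3 -> gt w d3 -> P w.
  case/setDP=> w2 w3 gt_w; rewrite /P !inE w2 gt_ge //= !andbT.
  by apply/negP => w1; apply: no_winner; exists w; rewrite // inE w1 w3.
have climb_X3 w : w \in X3 :\: X2 -> ge w d3 -> exists2 v, P v & gt v w.
  move=> /pref23[v v_in gt_vw] ge_w; exists v => //.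
  exact: P_of_X2 v_in (gt_ge_trans gt_vw ge_w).
apply: (@no_ascending_pred _ _ gt_irr gt_trans P _ d3);
  last by move: d3_in; rewrite /P !inE ge_refl => /andP[-> ->]; rewrite orbT.
move=> z /andP[/setDP[z23 z1] ge_z].
have [z2|z2] := boolP (z \in X2); last first.
  by apply: climb_X3; rewrite // inE z2; move: z23; rewrite inE (negbTE z2).
have z21 : z \in X2 :\: X1 by rewrite inE z1 z2.
have [d1 /setDP[d1_1 d1_2] gt_d1z] := pref12 z z21.
have gt_d1d3 := gt_ge_trans gt_d1z ge_z.
have d1_32 : d1 \in X3 :\: X2.
  rewrite inE d1_2 /=; apply/negPn/negP => d1_3.
  by apply: no_winner; exists d1; rewrite // inE d1_1 d1_3.
have [v Pv gt_vd1] := climb_X3 d1 d1_32 (gt_ge gt_d1d3).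
by exists v; last exact: gt_trans gt_vd1 gt_d1z.
Qed.

End SetPreference.

Theorem mainTheorem6 (T : finType) (ge : rel T) :
  total_order ge ->
  (forall X : {set T}, set_pref ge X X) /\
  (forall X1 X2 : {set T}, set_pref ge X1 X2 -> set_pref ge X2 X1 -> X1 = X2) /\
  (forall X1 X2 X3 : {set T}, ~~ (X1 \subset X3) -> ~~ (X3 \subset X1) ->
     set_pref ge X1 X2 -> set_pref ge X2 X3 -> set_pref ge X1 X3).
Proof.
move=> ge_total; split; first exact: set_pref_refl.
split; first exact: set_pref_anti.
by move=> X1 X2 X3 _ _; apply: set_pref_trans.
Qed.
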